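(* Let $f_j$, $j\in J=\{1,\dots,m\}$, be functions on $\mathbb{R}^n$, each strongly convex with constant $\mu_j>0$; let $D=\{x: f_j(x)\le 0,\ j\in J\}$ satisfy the Slater condition; let $f$ be a convex function attaining its minimum on $D$, such that no point of absolute minimum of $f$ on $\mathbb{R}^n$ (if one exists) lies in $\operatorname{int}D$. Let $x^*$ be the (unique) solution of $\min\{f(x):x\in D\}$, $F(x)=\max_{j\in J} f_j(x)$, $\mu=\min_{j\in J}\mu_j$, and for $\varepsilon\ge0$ let $D_\varepsilon=\{x\in\mathbb{R}^n: F(x)\le\varepsilon\}$. Let $\varepsilon>0$ and let $y\in D_\varepsilon$, $y\ne x^*$, be such that for every $\alpha\in(0,1]$ the point $z=\alpha y+(1-\alpha)x^*$ satisfies $F(z)>0$. Then $\|y-x^*\|\le\sqrt{\varepsilon/\mu}$.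
   Context: Each set $D_j=\{x:f_j(x)\le0\}$ is assumed to have nonempty interior. *)

From mathcomp Require Import all_boot all_order all_algebra.
From mathcomp Require Export reals.
Set Implicit Arguments. Unset Strict Implicit. Unset Printing Implicit Defensive.
Import Order.TTheory GRing.Theory Num.Theory.
Local Open Scope ring_scope.

Section Defs.
Variables (R : realType) (n : nat).

Definition enorm (v : 'rV[R]_n) : R := Num.sqrt (\sum_(i < n) v ord0 i ^+ 2).

Definition convexf (g : 'rV[R]_n -> R) : Prop :=
  forall x y (a : R), 0 <= a -> a <= 1 ->
    g (a *: x + (1 - a) *: y) <= a * g x + (1 - a) * g y.

(* strong convexity with constant mu (convention without the factor 1/2) *)
Definition strongly_convex (mu : R) (g : 'rV[R]_n -> R) : Prop :=
  forall x y (a : R), 0 <= a -> a <= 1 ->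
    g (a *: x + (1 - a) *: y)
      <= a * g x + (1 - a) * g y - mu * a * (1 - a) * enorm (x - y) ^+ 2.

Definition interior_pt (A : 'rV[R]_n -> Prop) (x : 'rV[R]_n) : Prop :=
  exists r : R, 0 < r /\ forall z, enorm (z - x) < r -> A z.

(* F(x) = max_j f_j(x) for the functions f_0,...,f_m (m+1 functions) *)
Definition Fmax (m : nat) (fs : 'I_m.+1 -> 'rV[R]_n -> R) (x : 'rV[R]_n) : R :=
  \big[Num.max/fs ord0 x]_(j < m.+1) fs j x.

Definition minmu (m : nat) (mus : 'I_m.+1 -> R) : R :=
  \big[Num.min/mus ord0]_(j < m.+1) mus j.

Definition Dset (m : nat) (fs : 'I_m.+1 -> 'rV[R]_n -> R) (x : 'rV[R]_n) : Prop :=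
  forall j, fs j x <= 0.

End Defs.

From mathcomp Require Import all_boot all_order all_algebra.
From mathcomp Require Import reals.
From mathcomp Require Import ring lra.
Set Implicit Arguments. Unset Strict Implicit. Unset Printing Implicit Defensive.
Import Order.TTheory GRing.Theory Num.Theory.
Local Open Scope ring_scope.

(* F = max_j f_j is strongly convex with constant mu = min_j mu_j, and F <= 0 at x*.
   Along the chord z_a = a y + (1 - a) x* this gives
   0 < F(z_a) <= a (eps - (1 - a) mu |y - x*|^2) for every a in (0, 1],
   and letting a tend to 0 yields mu |y - x*|^2 <= eps. *)

Lemma le_of_forall_weight_gt0 (R : realFieldType) (eps D : R) :
  (forall a, 0 < a -> a <= 1 -> 0 < eps - (1 - a) * D) -> D <= eps.
Proof.
move=> hpos; rewrite leNgt; apply/negP => epsD.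
have eps0 : 0 < eps by have := hpos 1 ltr01 (lexx 1); rewrite subrr mul0r subr0.
have D0 : 0 < D by apply: lt_trans epsD.
pose a := (D - eps) / (2 * D).
have aD : a * D = (D - eps) / 2 by rewrite /a; field; rewrite gt_eqF.
have a0 : 0 < a by rewrite divr_gt0 ?subr_gt0 ?mulr_gt0.
have a1 : a <= 1 by rewrite ler_pdivrMr ?mulr_gt0 //; lra.
by have := hpos a a0 a1; rewrite mulrBl mul1r aD; lra.
Qed.

Section StronglyConvex.
Variables (R : realType) (n : nat).
Implicit Types (g : 'rV[R]_n -> R) (x y : 'rV[R]_n).

Lemma strongly_convex_le (mu mu' : R) g :
  mu' <= mu -> strongly_convex mu g -> strongly_convex mu' g.
Proof.
move=> le_mu hg x y a a0 a1; apply: le_trans (hg x y a a0 a1) _.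
by rewrite lerD2l lerN2 -!mulrA ler_wpM2r // !mulr_ge0 ?subr_ge0 ?exprn_ge0 ?sqrtr_ge0.
Qed.

Lemma Fmax_ge (m : nat) (fs : 'I_m.+1 -> 'rV[R]_n -> R) j x : fs j x <= Fmax fs x.
Proof. exact: le_bigmax. Qed.

Lemma Fmax_le0 (m : nat) (fs : 'I_m.+1 -> 'rV[R]_n -> R) x :
  Dset fs x -> Fmax fs x <= 0.
Proof. by move=> hD; apply: bigmax_le. Qed.

Lemma strongly_convex_Fmax (m : nat) (fs : 'I_m.+1 -> 'rV[R]_n -> R) (mu : R) :
  (forall j, strongly_convex mu (fs j)) -> strongly_convex mu (Fmax fs).
Proof.
move=> hsc x y a a0 a1.
have fj_le j : fs j (a *: x + (1 - a) *: y)
    <= a * Fmax fs x + (1 - a) * Fmax fs y - mu * a * (1 - a) * enorm (x - y) ^+ 2.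
  apply: le_trans (hsc j x y a a0 a1) _; rewrite lerD2r.
  by apply: lerD; rewrite ler_wpM2l ?subr_ge0 ?Fmax_ge.
by apply: bigmax_le.
Qed.

Lemma strongly_convex_chord_dist (mu eps : R) g x y :
  strongly_convex mu g -> g x <= 0 -> g y <= eps ->
  (forall a, 0 < a -> a <= 1 -> 0 < g (a *: y + (1 - a) *: x)) ->
  mu * enorm (y - x) ^+ 2 <= eps.
Proof.
move=> hg gx gy hchord; apply: le_of_forall_weight_gt0 => a a0 a1.
rewrite -(pmulr_rgt0 _ a0); apply: lt_le_trans (hchord a a0 a1) _.
apply: le_trans (hg y x a (ltW a0) a1) _.
have ay : a * g y <= a * eps by rewrite ler_pM2l.
have ax : (1 - a) * g x <= 0 by rewrite mulr_ge0_le0 ?subr_ge0.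
rewrite mulrBr !mulrA; lra.
Qed.

Lemma minmu_le (m : nat) (mus : 'I_m.+1 -> R) j : minmu mus <= mus j.
Proof. exact: bigmin_le. Qed.

Lemma minmu_gt0 (m : nat) (mus : 'I_m.+1 -> R) :
  (forall j, 0 < mus j) -> 0 < minmu mus.
Proof. by move=> hmus; apply: lt_bigmin. Qed.

End StronglyConvex.

Theorem lemma1p1p6 (R : realType) (n m : nat)
  (fs : 'I_m.+1 -> 'rV[R]_n -> R) (mus : 'I_m.+1 -> R)
  (hmus : forall j, 0 < mus j)
  (hsc : forall j, strongly_convex (mus j) (fs j))
  (hDj : forall j, exists x, interior_pt (fun z => fs j z <= 0) x)
  (hslater : exists x, forall j, fs j x < 0)
  (f : 'rV[R]_n -> R) (hf : convexf f)
  (xs : 'rV[R]_n) (hxsD : Dset fs xs)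
  (hxsmin : forall x, Dset fs x -> f xs <= f x)
  (hnoint : forall x, (forall z, f x <= f z) -> ~ interior_pt (Dset fs) x)
  (eps : R) (heps : 0 < eps)
  (y : 'rV[R]_n) (hy : Fmax fs y <= eps) (hyx : y != xs)
  (hseg : forall a : R, 0 < a -> a <= 1 -> 0 < Fmax fs (a *: y + (1 - a) *: xs)) :
  enorm (y - xs) <= Num.sqrt (eps / minmu mus).
Proof.
(* Only strong convexity, x* in D, F(y) <= eps and the chord condition are used. *)
have mu0 := minmu_gt0 hmus.
have hF : strongly_convex (minmu mus) (Fmax fs).
  by apply: strongly_convex_Fmax => j; apply: strongly_convex_le (hsc j); apply: minmu_le.
have dist := strongly_convex_chord_dist hF (Fmax_le0 hxsD) hy hseg.
rewrite -[enorm _]ger0_norm ?sqrtr_ge0 // -sqrtr_sqr ler_sqrt; last by rewrite divr_ge0 ?ltW.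
by rewrite ler_pdivlMr // mulrC.
Qed.
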